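(* For all $n\ge2$, $R_{n+1}\ge R_n$.
   Context: Scheduling on two machines with $n$ tasks. A processing-time matrix is $T\in\mathbb{R}_{++}^{2\times n}$; an allocation is $X\in\{0,1\}^{2\times n}$ with $X_{1j}+X_{2j}=1$; makespan $M(X,T)=\max_{i\in\{1,2\}}\sum_jX_{ij}T_{ij}$; $M^*(T)=\min_XM(X,T)$. $\mathcal{P}_n$ is the set of Borel probability measures on $\mathbb{R}^n$ supported in $\mathbb{R}_{++}^n$. For $\mathbb{P}\in\mathcal{P}_n$, algorithm $\mathcal{A}^{\mathbb{P}}$ draws $\mathbf{z}\sim\mathbb{P}$ and sends task $j$ to machine 1 iff $T_{1j}/T_{2j}<z_j$ (else to machine 2); $M(\mathbb{P},T)$ is its expected makespan, $R_n(\mathbb{P})=\sup_{T\in\mathbb{R}_{++}^{2\times n}}M(\mathbb{P},T)/M^*(T)\in[1,\infty]$, and $R_n=\inf_{\mathbb{P}\in\mathcal{P}_n}R_n(\mathbb{P})$. *)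

From HB Require Import structures.
From mathcomp Require Import all_boot all_order all_algebra.
From mathcomp Require Import all_classical all_reals all_analysis.
Set Implicit Arguments. Unset Strict Implicit. Unset Printing Implicit Defensive.
Import Order.TTheory GRing.Theory Num.Theory.
Local Open Scope classical_set_scope.
Local Open Scope ring_scope.

Section Scheduling.
Variable R : realType.

Definition mach1 : 'I_2 := ord0.
Definition mach2 : 'I_2 := @Ordinal 2 1 isT.

Definition pos_times n (T : 'M[R]_(2, n)) : Prop := forall i j, 0 < T i j.

Definition allocation n (X : 'M[nat]_(2, n)) : Prop :=
  (forall i j, X i j = 0%N \/ X i j = 1%N) /\
  (forall j, (X mach1 j + X mach2 j)%N = 1%N).

Definition load n (X : 'M[nat]_(2, n)) (T : 'M[R]_(2, n)) (i : 'I_2) : R :=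
  \sum_(j < n) (X i j)%:R * T i j.
Definition makespan n (X : 'M[nat]_(2, n)) (T : 'M[R]_(2, n)) : R :=
  Num.max (load X T mach1) (load X T mach2).

Definition opt_makespan n (T : 'M[R]_(2, n)) : R :=
  inf [set makespan X T | X in [set X | allocation X]].

Definition threshold_alloc n (z : n.-tuple R) (T : 'M[R]_(2, n)) : 'M[nat]_(2, n) :=
  \matrix_(i < 2, j < n)
    (if i == mach1 then nat_of_bool (T mach1 j / T mach2 j < tnth z j)
     else nat_of_bool (~~ (T mach1 j / T mach2 j < tnth z j))).

Definition supported_pos n (P : probability (n.-tuple R) R) : Prop :=
  P [set z : n.-tuple R | forall j, 0 < tnth z j] = 1%E.

Definition exp_makespan n (P : probability (n.-tuple R) R) (T : 'M[R]_(2, n)) : \bar R :=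
  (\int[P]_z (makespan (threshold_alloc z T) T)%:E)%E.

Definition ratio n (P : probability (n.-tuple R) R) : \bar R :=
  ereal_sup [set (exp_makespan P T * ((opt_makespan T)^-1)%:E)%E
            | T in [set T | pos_times T]].

Definition Rn (n : nat) : \bar R :=
  ereal_inf [set ratio P | P in [set P : probability (n.-tuple R) R | supported_pos P]].

End Scheduling.

From Pilot Require Import Defs.
From HB Require Import structures.
From mathcomp Require Import all_boot all_order all_algebra.
From mathcomp Require Import all_classical all_reals all_analysis.
From mathcomp Require Import measurable_realfun.
Import Order.TTheory GRing.Theory Num.Theory.
Set Implicit Arguments. Unset Strict Implicit. Unset Printing Implicit Defensive.

(* Push a threshold distribution P for n + 1 tasks forward along [tbehead] to
   get one, P', for n tasks.  Given an instance T with n tasks, prepend a task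
   of size e on both machines: whatever thresholds are drawn, the loads on the
   extended instance dominate those of P' on T, while the optimum grows by at
   most e.  Hence E_P'[M(T)] / (M*(T) + e) <= R_{n+1}(P) for every e > 0, and
   since M*(T) > 0 (n >= 1), letting e tend to 0 gives R_n(P') <= R_{n+1}(P). *)

Section Scheduling.
Local Open Scope classical_set_scope.
Local Open Scope ring_scope.
Variable R : realType.

Definition col_cons (V : Type) m n (c : 'cV[V]_m) (A : 'M[V]_(m, n)) : 'M[V]_(m, n.+1) :=
  \matrix_(i, j) if unlift ord0 j is Some k then A i k else c i ord0.

Lemma col_cons0 (V : Type) m n (c : 'cV[V]_m) (A : 'M[V]_(m, n)) i :
  col_cons c A i ord0 = c i ord0.
Proof. by rewrite mxE unlift_none. Qed.

Lemma col'_col_cons (V : Type) m n (c : 'cV[V]_m) (A : 'M[V]_(m, n)) :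
  col' ord0 (col_cons c A) = A.
Proof. by apply/matrixP => i k; rewrite !mxE liftK. Qed.

Lemma pos_times_col_cons n (c : 'cV[R]_2) (T : 'M[R]_(2, n)) :
  (forall i, 0 < c i ord0) -> pos_times T -> pos_times (col_cons c T).
Proof. by move=> c_gt0 T_gt0 i j; rewrite mxE; case: unlift. Qed.

Lemma allocation_col_cons n (x : 'cV[nat]_2) (X : 'M[nat]_(2, n)) :
  allocation x -> allocation X -> allocation (col_cons x X).
Proof.
by move=> [x01 x1] [X01 X1]; split=> [i j|j]; rewrite !mxE; case: unlift.
Qed.

Definition all_on_mach1 n : 'M[nat]_(2, n) := \matrix_(i, j) nat_of_bool (i == mach1).

Lemma allocation_all_on_mach1 n : allocation (all_on_mach1 n).
Proof. by split=> [i j|j]; rewrite !mxE //; case: (i == mach1); [right|left]. Qed.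

Lemma makespans_neq0 n (T : 'M[R]_(2, n)) :
  [set makespan X T | X in [set X | allocation X]] !=set0.
Proof.
by exists (makespan (all_on_mach1 n) T), (all_on_mach1 n) => //;
  apply: allocation_all_on_mach1.
Qed.

Lemma load_recl n (X : 'M[nat]_(2, n.+1)) (T : 'M[R]_(2, n.+1)) i :
  load X T i = (X i ord0)%:R * T i ord0 + load (col' ord0 X) (col' ord0 T) i.
Proof.
by rewrite /load big_ord_recl; congr (_ + _); apply: eq_bigr => k _; rewrite !mxE.
Qed.

Lemma load_ge0 n (X : 'M[nat]_(2, n)) (T : 'M[R]_(2, n)) i :
  pos_times T -> 0 <= load X T i.
Proof. by move=> T_gt0; apply: sumr_ge0 => j _; rewrite mulr_ge0 // ltW. Qed.

Lemma makespan_ge0 n (X : 'M[nat]_(2, n)) (T : 'M[R]_(2, n)) :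
  pos_times T -> 0 <= makespan X T.
Proof. by move=> T_gt0; rewrite le_max load_ge0. Qed.

Lemma makespan_col'0_le n (X : 'M[nat]_(2, n.+1)) (T : 'M[R]_(2, n.+1)) :
  pos_times T -> makespan (col' ord0 X) (col' ord0 T) <= makespan X T.
Proof.
move=> T_gt0; have load_le i : load (col' ord0 X) (col' ord0 T) i <= load X T i.
  by rewrite load_recl lerDr mulr_ge0 // ltW.
exact: le_max2.
Qed.

Lemma load_ge_entry n (X : 'M[nat]_(2, n)) (T : 'M[R]_(2, n)) i j :
  pos_times T -> X i j = 1%N -> T i j <= load X T i.
Proof.
move=> T_gt0 Xij; rewrite /load (bigD1 j) //= Xij mul1r lerDl.
by apply: sumr_ge0 => k _; rewrite mulr_ge0 // ltW.
Qed.

Lemma opt_makespan_le n (X : 'M[nat]_(2, n)) (T : 'M[R]_(2, n)) :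
  pos_times T -> allocation X -> opt_makespan T <= makespan X T.
Proof.
move=> T_gt0 alX; apply: ge_inf; last by exists X.
by exists 0 => _ [Y _ <-]; apply: makespan_ge0.
Qed.

Lemma opt_makespan_gt0 n (T : 'M[R]_(2, n)) :
  (0 < n)%N -> pos_times T -> 0 < opt_makespan T.
Proof.
move=> n_gt0 T_gt0; pose j := Ordinal n_gt0.
apply: (@lt_le_trans _ _ (Num.min (T mach1 j) (T mach2 j))).
  by rewrite lt_min !T_gt0.
apply: lb_le_inf; first exact: makespans_neq0.
move=> _ [X [X01 X1] <-]; rewrite le_max !ge_min.
have := X1 j; case: (X01 mach1 j) => [-> /= X2j|X1j _].
  by rewrite (load_ge_entry T_gt0 X2j) !orbT.
by rewrite (load_ge_entry T_gt0 X1j).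
Qed.

Lemma opt_makespan_col_cons_le n (T : 'M[R]_(2, n)) e :
  pos_times T -> 0 < e -> opt_makespan (col_cons (const_mx e) T) <= opt_makespan T + e.
Proof.
move=> T_gt0 e_gt0; rewrite -lerBlDr.
apply: lb_le_inf; first exact: makespans_neq0.
move=> _ [X alX <-]; rewrite lerBlDr.
have alX' := allocation_col_cons (allocation_all_on_mach1 1) alX.
have T'_gt0 : pos_times (col_cons (const_mx e) T).
  by apply: pos_times_col_cons => // i; rewrite mxE.
apply: le_trans (opt_makespan_le T'_gt0 alX') _.
have load_le i :
    load (col_cons (all_on_mach1 1) X) (col_cons (const_mx e) T) i <= load X T i + e.
  rewrite load_recl !col'_col_cons !col_cons0 !mxE addrC lerD2l.
  by case: (i == mach1); rewrite ?mul1r ?mul0r // ltW.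
by rewrite ge_max !(le_trans (load_le _)) // lerD2r le_max lexx ?orbT.
Qed.

Definition tbehead n (z : n.+1.-tuple R) : n.-tuple R := [tuple of behead z].

HB.instance Definition _ n :=
  isMeasurableFun.Build _ _ _ _ (@tbehead n) (@measurable_behead _ _ n).

Lemma tnth_tbehead n (z : n.+1.-tuple R) k : tnth (tbehead z) k = tnth z (lift ord0 k).
Proof. by case/tupleP: z => x t; rewrite tnthS !(tnth_nth x). Qed.

Lemma col'_threshold_alloc n (z : n.+1.-tuple R) (T : 'M[R]_(2, n.+1)) :
  col' ord0 (threshold_alloc z T) = threshold_alloc (tbehead z) (col' ord0 T).
Proof. by apply/matrixP => i k; rewrite !mxE tnth_tbehead. Qed.

Lemma makespan_threshold_col_cons n (z : n.+1.-tuple R) (c : 'cV[R]_2)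
    (T : 'M[R]_(2, n)) : pos_times (col_cons c T) ->
  makespan (threshold_alloc (tbehead z) T) T <=
  makespan (threshold_alloc z (col_cons c T)) (col_cons c T).
Proof.
move=> T'_gt0; rewrite -[in X in X <= _](col'_col_cons c T) -col'_threshold_alloc.
exact: makespan_col'0_le.
Qed.

Lemma measurable_natr_bool d (T : measurableType d) (f : T -> bool) :
  measurable_fun setT f -> measurable_fun setT (fun x => ((f x : nat)%:R : R)).
Proof.
move=> mf; rewrite (_ : (fun x => _) = fun x => if f x then 1 else 0).
  exact: measurable_fun_ifT.
by apply/funext => x; case: (f x).
Qed.

Lemma measurable_makespan_threshold n (T : 'M[R]_(2, n)) :
  measurable_fun setT (fun z : n.-tuple R => (makespan (threshold_alloc z T) T)%:E).
Proof.
apply/measurable_EFinP.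
have measurable_entry i j :
    measurable_fun setT (fun z : n.-tuple R => ((threshold_alloc z T i j)%:R : R)).
  have m_cmp :
      measurable_fun setT (fun z : n.-tuple R => T mach1 j / T mach2 j < tnth z j).
    by apply: measurable_fun_ltr => //; apply: measurable_tnth.
  under eq_fun do rewrite mxE.
  by case: (i == mach1); apply: measurable_natr_bool; last apply: measurable_neg.
have measurable_load i : measurable_fun setT (fun z => load (threshold_alloc z T) T i).
  by apply: measurable_sum => j; apply: measurable_funM.
exact: measurable_maxr.
Qed.

Lemma measurable_pos_orthant n :
  measurable [set z : n.-tuple R | forall j, 0 < tnth z j].
Proof.
rewrite (_ : [set z | _] =
  \bigcap_(j in [set: 'I_n]) ((fun z : n.-tuple R => tnth z j) @^-1` `]0, +oo[)).
  apply: fin_bigcap_measurable; first exact: finite_finset.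
  move=> j _; rewrite -[_ @^-1` _]setTI.
  exact: measurable_tnth (measurable_itv _).
apply/seteqP; split=> z /= z_gt0 j; first by rewrite /= in_itv /= andbT z_gt0.
by have := z_gt0 j I; rewrite /= in_itv /= andbT.
Qed.

Lemma supported_pos_tbehead n (P : probability (n.+1.-tuple R) R) :
  supported_pos P -> supported_pos (distribution P (@tbehead n)).
Proof.
rewrite /supported_pos => P1; apply/eqP; rewrite eq_le probability_le1 /=;
  last exact: measurable_pos_orthant.
rewrite -P1; apply: le_measure; rewrite ?inE.
- exact: measurable_pos_orthant.
- rewrite -[_ @^-1` _]setTI; apply: (measurable_behead measurableT).
  exact: measurable_pos_orthant.
- by move=> z z_gt0 j; rewrite /= tnth_tbehead.
Qed.

Local Open Scope ereal_scope.

Lemma exp_makespan_ge0 n (P : probability (n.-tuple R) R) (T : 'M[R]_(2, n)) :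
  pos_times T -> 0 <= exp_makespan P T.
Proof. by move=> T_gt0; apply: integral_ge0 => z _; rewrite lee_fin makespan_ge0. Qed.

Lemma exp_makespan_tbehead_le n (P : probability (n.+1.-tuple R) R) (c : 'cV[R]_2)
    (T : 'M[R]_(2, n)) : pos_times (col_cons c T) ->
  exp_makespan (distribution P (@tbehead n)) T <= exp_makespan P (col_cons c T).
Proof.
move=> T'_gt0; have T_gt0 : pos_times T by move=> i j; rewrite -(col'_col_cons c T) mxE.
rewrite /exp_makespan ge0_integral_distribution; last 2 first.
- exact: measurable_makespan_threshold.
- by move=> z; rewrite lee_fin makespan_ge0.
apply: ge0_le_integral => //.
- by move=> z _; rewrite lee_fin makespan_ge0.
- by apply: measurableT_comp => //; apply: measurable_makespan_threshold.
- exact: measurable_makespan_threshold.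
- by move=> z _; rewrite lee_fin makespan_threshold_col_cons.
Qed.

Lemma ratio_tbehead_le n (P : probability (n.+1.-tuple R) R) : (0 < n)%N ->
  Defs.ratio (distribution P (@tbehead n)) <= Defs.ratio P.
Proof.
move=> n_gt0; apply: ge_ereal_sup => _ [T T_gt0 <-].
set E := exp_makespan _ T; set o := opt_makespan T.
have o_gt0 : (0 < o)%R by apply: opt_makespan_gt0.
have E_ge0 : 0 <= E by apply: exp_makespan_ge0.
apply/lee_mul01Pr; first by rewrite mule_ge0 // lee_fin invr_ge0 ltW.
move=> t /andP[t_gt0 t_lt1].
(* e is chosen so that o + e = o / t *)
pose e := (o * (t^-1 - 1))%R.
have e_gt0 : (0 < e)%R by rewrite mulr_gt0 // subr_gt0 invf_gt1.
pose T' := col_cons (const_mx e) T.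
have T'_gt0 : pos_times T' by apply: pos_times_col_cons => // i; rewrite mxE.
apply: le_trans (ereal_sup_ubound _); last by exists T'.
rewrite muleCA -EFinM; apply: lee_pmul => //.
- by rewrite lee_fin mulr_ge0 // ltW // invr_gt0.
- exact: exp_makespan_tbehead_le.
- rewrite lee_fin -invf_div lef_pV2 ?posrE ?divr_gt0 ?opt_makespan_gt0 //.
  apply: le_trans (opt_makespan_col_cons_le T_gt0 e_gt0) _.
  by rewrite /e mulrBr mulr1 addrC subrK.
Qed.

End Scheduling.

Theorem corollary4 (R : realType) (n : nat) (hn : (2 <= n)%N) :
  (Rn R n <= Rn R n.+1)%E.
Proof.
apply: le_ereal_inf_tmp => _ [P P_pos <-].
apply: le_trans (ratio_tbehead_le P (ltnW hn)).
apply: ereal_inf_lbound; exists (distribution P (@tbehead R n)) => //.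
exact: supported_pos_tbehead.
Qed.
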